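(* Let $G,H$ be graded groups, $U\subset G$ open and $\Phi:U\to H$ a smooth map. Then $\Phi$ is uniformly Pansu differentiable on $U$ if and only if for each $x\in U$, each $i,j\ge1$ and each $V\in\mathfrak g_j$, the limit of $$\varepsilon^{-i}\,\mathrm{pr}_{\mathfrak h,i}\circ\ln_H\big(\Phi_x(\exp_G(\varepsilon^jV))\big)$$ as $\varepsilon\to0^+$ exists, and, for each $i,j$, these limits hold locally uniformly on $U\times\mathfrak g_j$.
   Context: A graded group is a connected, simply connected nilpotent real Lie group $G$ whose Lie algebra $\mathfrak g=\bigoplus_{j\ge1}\mathfrak g_j$ (finitely many nonzero) satisfies $[\mathfrak g_i,\mathfrak g_j]\subset\mathfrak g_{i+j}$; $\exp_G$ is a global diffeomorphism with inverse $\ln_G$. Dilations: $\delta_rX=r^jX$ for $X\in\mathfrak g_j$, $r>0$, and $\delta_r(\exp_GX)=\exp_G(\delta_rX)$. $H$ is a graded group with Lie algebra $\mathfrak h=\bigoplus_j\mathfrak h_j$; $\mathrm{pr}_{\mathfrak h,i}$ is the projection onto $\mathfrak h_i$ along $\bigoplus_{j\neq i}\mathfrak h_j$. Notation: $\Phi_x(y):=\Phi(x)^{-1}\Phi(xy)$. $\Phi$ is Pansu differentiable at $x\in U$ if for every $z\in G$ the limit $\mathrm{PD}_x\Phi(z)=\lim_{\varepsilon\to0^+}\delta_{\varepsilon^{-1}}(\Phi(x)^{-1}\Phi(x\delta_\varepsilon z))$ exists; uniformly Pansu differentiable on $U$ means Pansu differentiable at every $x\in U$ with the limit holding locally uniformly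 on $U\times G$. *)

From HB Require Import structures.
From mathcomp Require Import all_boot all_order all_algebra.
From mathcomp Require Import all_classical all_reals all_analysis.
Set Implicit Arguments. Unset Strict Implicit. Unset Printing Implicit Defensive.
Import Order.TTheory GRing.Theory Num.Theory.
Import numFieldNormedType.Exports.
Local Open Scope classical_set_scope.
Local Open Scope ring_scope.

Section GradedDefs.
Variable R : realType.

Fixpoint iterD (n m : nat) (vs : seq 'rV[R]_n) (f : 'rV[R]_n -> 'rV[R]_m)
  : 'rV[R]_n -> 'rV[R]_m :=
  match vs with
  | [::] => f
  | v :: vs' => fun x => derive (iterD vs' f) x v
  end.

Definition smooth_on (n m : nat) (U : set 'rV[R]_n) (f : 'rV[R]_n -> 'rV[R]_m) :=
  forall vs : seq 'rV[R]_n,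
    (forall x, U x -> {for x, continuous (iterD vs f)}) /\
    (forall v x, U x -> derivable (iterD vs f) x v).

Definition dil (n : nat) (deg : 'I_n -> nat) (r : R) (x : 'rV[R]_n) : 'rV[R]_n :=
  \row_k (r ^+ deg k * x ord0 k).

(* A graded group, in exponential coordinates w.r.t. a basis adapted to the
   grading: the carrier R^n is identified with the Lie algebra via exp_G,
   so exp_G = ln_G = id; layer g_j = span of the basis vectors e_k with
   deg k = j. *)
Record graded_group := GradedGroup {
  gdim : nat;
  gdeg : 'I_gdim -> nat;
  gmul : 'rV[R]_gdim -> 'rV[R]_gdim -> 'rV[R]_gdim;
  gdeg_pos : forall k, (0 < gdeg k)%N;
  gmulA : forall x y z, gmul x (gmul y z) = gmul (gmul x y) z;
  gmul0x : forall x, gmul 0 x = x;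
  gmulx0 : forall x, gmul x 0 = x;
  gmulN : forall x, gmul x (- x) = 0;
  (* t |-> t x is the one-parameter subgroup with velocity x: exp = id *)
  gmul_line : forall x (s t : R), gmul (s *: x) (t *: x) = (s + t) *: x;
  gmul_dil : forall r : R, 0 < r -> forall x y,
      dil gdeg r (gmul x y) = gmul (dil gdeg r x) (dil gdeg r y);
  gmul_smooth : smooth_on setT
      (fun z : 'rV[R]_(gdim + gdim) => gmul (lsubmx z) (rsubmx z))
}.

Variables G H : graded_group.

(* Phi_x(y) = Phi(x)^{-1} Phi(x y) ; the inverse is -w in exp coordinates *)
Definition transl (Phi : 'rV[R]_(gdim G) -> 'rV[R]_(gdim H)) x y :=
  @gmul H (- Phi x) (Phi (@gmul G x y)).

Definition pr_layer (i : nat) (w : 'rV[R]_(gdim H)) : 'rV[R]_(gdim H) :=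
  \row_k (if @gdeg H k == i then w ord0 k else 0).

Definition in_layer (j : nat) (V : 'rV[R]_(gdim G)) :=
  forall k, @gdeg G k != j -> V ord0 k = 0.

End GradedDefs.

Definition loc_unif_cvg0 (R : realType) (T : topologicalType) (m : nat)
  (D : set T) (F : R -> T -> 'rV[R]_m) (L : T -> 'rV[R]_m) :=
  forall p, D p -> exists2 W, nbhs p W &
    forall e : R, 0 < e ->
      \forall eps \near 0^'+, forall q, W q -> D q -> `|F eps q - L q| < e.

Definition unif_Pansu_diff (R : realType) (G H : graded_group R)
  (U : set 'rV[R]_(gdim G)) (Phi : 'rV[R]_(gdim G) -> 'rV[R]_(gdim H)) :=
  exists PD : 'rV[R]_(gdim G) -> 'rV[R]_(gdim G) -> 'rV[R]_(gdim H),
    loc_unif_cvg0 (fun p : 'rV[R]_(gdim G) * 'rV[R]_(gdim G) => U p.1)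
      (fun eps p => dil (@gdeg R H) eps^-1 (transl Phi p.1 (dil (@gdeg R G) eps p.2)))
      (fun p => PD p.1 p.2).

From HB Require Import structures.
From mathcomp Require Import all_boot all_order all_algebra.
From mathcomp Require Import all_classical all_reals all_analysis.
From mathcomp Require Import ring lra.
Import Order.TTheory GRing.Theory Num.Theory.
Import numFieldNormedType.Exports.
Local Open Scope classical_set_scope.
Local Open Scope ring_scope.
Set Implicit Arguments. Unset Strict Implicit. Unset Printing Implicit Defensive.

(* For V in the layer g_j one has dil eps V = eps^j V, and pr_i commutes with
   dil (1/eps) up to the factor eps^-i; so the quotients in the statement are the
   layer-i components of the Pansu difference quotient restricted to g_j, and
   uniform Pansu differentiability yields their limits.

   Conversely, every z factors continuously as z = z_1 z_2 ... z_N with z_t in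
   g_t: in exponential coordinates (ab)_k = a_k + b_k whenever a and b vanish in
   all degrees below deg k, so removing the degree-t part of z leaves the lower
   degrees at zero.  The cocycle identity Phi_x(y w) = Phi_x(y) Phi_(x y)(w),
   rescaled by the dilations, writes the Pansu quotient at z as the product of
   the quotient at z_1, whose limit is the hypothesis (all layers i combined),
   and a quotient at z_2 ... z_N based at a point tending to x.  By downward
   induction on t these quotients converge jointly in (eps, x, z); continuity of
   the group law carries the limits through the products, and compactness of
   small cubes turns joint limits into locally uniform convergence. *)

Section MatrixNorm.
Variable R : realType.

Lemma mxcoef_le_norm (m n : nat) (M : 'M[R]_(m, n)) i j : `|M i j| <= `|M|.
Proof.
rewrite [leRHS]/Num.norm /= mx_normrE.
exact: (le_bigmax _ (fun ij : 'I_m * 'I_n => `|M ij.1 ij.2|) (i, j)).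
Qed.

Lemma mx_norm_le (m n : nat) (M : 'M[R]_(m, n)) e :
  0 <= e -> (forall i j, `|M i j| <= e) -> `|M| <= e.
Proof.
move=> e0 HM; rewrite [leLHS]/Num.norm /= mx_normrE.
by apply: bigmax_le => // -[i j] _; exact: HM.
Qed.

Lemma mx_norm_lt (m n : nat) (M : 'M[R]_(m, n)) e :
  0 < e -> (forall i j, `|M i j| < e) -> `|M| < e.
Proof.
move=> e0 HM; rewrite [ltLHS]/Num.norm /= mx_normrE.
by apply: bigmax_lt => // -[i j] _; exact: HM.
Qed.

Lemma norm_row_mx_lt (m n1 n2 : nat) (a : 'M[R]_(m, n1)) (b : 'M[R]_(m, n2)) e :
  `|a| < e -> `|b| < e -> `|row_mx a b| < e.
Proof.
move=> ha hb; apply: mx_norm_lt => [|i j]; first exact: le_lt_trans ha.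
rewrite -[j]splitK; case: (fintype.split j) => j' /=.
  by rewrite row_mxEl; exact: le_lt_trans (mxcoef_le_norm _ _ _) ha.
by rewrite row_mxEr; exact: le_lt_trans (mxcoef_le_norm _ _ _) hb.
Qed.

End MatrixNorm.

Section RowTruncation.
Variables (R : realType) (n : nat) (v : 'rV[R]_n).

Definition row_trunc (t : nat) : 'rV[R]_n := \row_l (if (l < t)%N then v ord0 l else 0).

Lemma row_trunc0 : row_trunc 0 = 0.
Proof. by apply/rowP => l; rewrite !mxE. Qed.

Lemma row_trunc_id : row_trunc n = v.
Proof. by apply/rowP => l; rewrite mxE ltn_ord. Qed.

Lemma row_truncS (m : 'I_n) : row_trunc m.+1 = row_trunc m + v ord0 m *: delta_mx ord0 m.
Proof.
apply/rowP => l; rewrite !mxE eqxx /= ltnS leq_eqVlt.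
case: (eqVneq l m) => [-> | lm] /=; first by rewrite eqxx ltnn add0r mulr1.
by rewrite (_ : (l == m :> nat) = false) ?mulr0 ?addr0 //; exact/negbTE.
Qed.

Lemma norm_row_trunc_add (m : 'I_n) s : `|s| <= `|v ord0 m| ->
  `|row_trunc m + s *: delta_mx ord0 m| <= `|v|.
Proof.
move=> hs; apply: mx_norm_le => // i l; rewrite (ord1 i) !mxE eqxx /=.
case: (eqVneq l m) => [-> | lm] /=.
  by rewrite ltnn mulr1 add0r; exact: le_trans hs (mxcoef_le_norm _ _ _).
rewrite mulr0 addr0; case: ifP => _; last by rewrite normr0.
exact: mxcoef_le_norm.
Qed.

End RowTruncation.

Section PairNorm.
Variables (R : realType) (V W : normedModType R).

Lemma norm_pair_lt (x : V * W) e : `|x.1| < e -> `|x.2| < e -> `|x| < e.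
Proof. by rewrite prod_normE gt_max => -> ->. Qed.

Lemma ler_norm_fst (x : V * W) : `|x.1| <= `|x|.
Proof. by rewrite prod_normE le_max lexx. Qed.

Lemma ler_norm_snd (x : V * W) : `|x.2| <= `|x|.
Proof. by rewrite prod_normE le_max lexx orbT. Qed.

End PairNorm.

Definition cont_at (R : realType) (V W : normedModType R) (f : V -> W) (x0 : V) :=
  forall e, 0 < e -> exists2 d, 0 < d & forall x, `|x - x0| < d -> `|f x - f x0| < e.

Section EpsilonDeltaContinuity.
Variables (R : realType) (V W X : normedModType R).

Lemma continuous_cont_at (f : V -> W) x0 : {for x0, continuous f} -> cont_at f x0.
Proof.
move=> /cvgrPdist_lt cf e /cf /nbhs_ballP [d d0 Hd]; exists d => // x hx.
rewrite distrC; apply: Hd; by rewrite -ball_normE /ball_ /= distrC.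
Qed.

Lemma cont_at_comp (f : V -> W) (g : W -> X) x0 :
  cont_at f x0 -> cont_at g (f x0) -> cont_at (g \o f) x0.
Proof.
move=> cf cg e /cg [d1 d10 H1]; have [d2 d20 H2] := cf d1 d10.
by exists d2 => // x /H2 /H1.
Qed.

Lemma cont_at_lip (f : V -> W) x0 :
  (forall x, `|f x - f x0| <= `|x - x0|) -> cont_at f x0.
Proof. by move=> Hf e e0; exists e => // x; exact: le_lt_trans (Hf x). Qed.

Lemma cont_at_pair (f : V -> W) (g : V -> X) x0 :
  cont_at f x0 -> cont_at g x0 -> cont_at (fun x => (f x, g x)) x0.
Proof.
move=> cf cg e e0; have [d1 d10 H1] := cf e e0; have [d2 d20 H2] := cg e e0.
exists (Num.min d1 d2); first by rewrite lt_min d10.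
move=> x; rewrite lt_min => /andP [/H1 h1 /H2 h2].
exact: (norm_pair_lt (x := (f x, g x) - (f x0, g x0)) h1 h2).
Qed.

Lemma nbhs_norm_lt (p : V) (A : set V) : nbhs p A ->
  exists2 r, 0 < r & forall q, `|q - p| < r -> A q.
Proof.
by move=> /nbhs_normP [r r0 Hr]; exists r => // q hq; apply: Hr; rewrite /ball_ /= distrC.
Qed.

Lemma open_norm_lt (U : set V) x : open U -> U x ->
  exists2 r, 0 < r & forall y, `|y - x| < r -> U y.
Proof. by move=> oU Ux; apply: nbhs_norm_lt; exact: open_nbhs_nbhs. Qed.

End EpsilonDeltaContinuity.

Section PairContinuity.
Variables (R : realType) (V W : normedModType R).

Lemma cont_at_fst (p : V * W) : cont_at (fun q : V * W => q.1) p.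
Proof. by apply: cont_at_lip => q; exact: ler_norm_fst (q - p). Qed.

Lemma cont_at_snd (p : V * W) : cont_at (fun q : V * W => q.2) p.
Proof. by apply: cont_at_lip => q; exact: ler_norm_snd (q - p). Qed.

End PairContinuity.

Section Dilation.
Variables (R : realType) (n : nat) (deg : 'I_n -> nat).

Lemma dil0 (r : R) : dil deg r 0 = 0.
Proof. by apply/rowP => k; rewrite !mxE mulr0. Qed.

Lemma norm_dil_le (r : R) e (w : 'rV[R]_n) : 0 < r -> r <= 1 ->
  (forall l, (deg l < e)%N -> w ord0 l = 0) -> `|dil deg r w| <= r ^+ e * `|w|.
Proof.
move=> r0 r1 Hw; have re0 : 0 <= r ^+ e by rewrite exprn_ge0 // ltW.
apply: mx_norm_le => [|i l]; first exact: mulr_ge0.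
rewrite (ord1 i) mxE; case: (ltnP (deg l) e) => [/Hw ->|el].
  by rewrite mulr0 normr0 mulr_ge0.
rewrite normrM ger0_norm ?exprn_ge0 ?(ltW r0) //.
apply: ler_pM => //; first exact: exprn_ge0 (ltW r0).
  exact: ler_wiXn2l (ltW r0) r1 _ _ el.
exact: mxcoef_le_norm.
Qed.

Lemma dil_cont_at (c : R) w0 : cont_at (dil deg c) w0.
Proof.
pose C := (1 + `|c|) ^+ (\max_k deg k).
have C1 : 1 <= C by rewrite exprn_ege1 // lerDl.
have C0 : 0 < C by exact: lt_le_trans C1.
move=> e e0; exists (e / C) => [|w]; first exact: divr_gt0.
rewrite ltr_pdivlMr // mulrC; apply: le_lt_trans.
apply: mx_norm_le => [|i l]; first by rewrite mulr_ge0 // ltW.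
rewrite (ord1 i) !mxE -mulrBr normrM normrX.
apply: ler_pM => //.
  apply: le_trans (_ : (1 + `|c|) ^+ deg l <= C).
    by rewrite lerXn2r ?nnegrE ?addr_ge0 // lerDr.
  by apply: ler_weXn2l; [rewrite lerDl | exact: leq_bigmax].
by have := mxcoef_le_norm (w - w0) ord0 l; rewrite !mxE.
Qed.

End Dilation.

Section RealAnalysis.
Variable R : realType.

Lemma derivable_line (m p : nat) (f : 'rV[R]_m -> 'rV[R]_p) z0 w (s : R) :
  derivable f (s *: w + z0) w ->
  derivable (fun t : R => f (t *: w + z0)) s 1 /\
  derive (fun t : R => f (t *: w + z0)) s 1 = derive f (s *: w + z0) w.
Proof.
have E : (fun h : R => h^-1 *: (((fun t : R => f (t *: w + z0)) \o shift s) (h *: 1)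
             - (fun t : R => f (t *: w + z0)) s)) =
         (fun h : R => h^-1 *: ((f \o shift (s *: w + z0)) (h *: w) - f (s *: w + z0))).
  apply/funext => h /=; congr (_ *: (f _ - _)).
  by rewrite /shift /= scalerDl [h *: 1]mulr1 addrA.
by rewrite /derivable /derive E.
Qed.

Lemma is_derive_coord (p : nat) (g : R -> 'rV[R]_p) (s : R) k :
  derivable g s 1 -> is_derive s 1 (fun t => g t ord0 k) (derive g s 1 ord0 k).
Proof.
move=> dg; rewrite derive_mx // mxE; apply/derivableP.
exact: (derivable_mxP g s 1).1 dg ord0 k.
Qed.

Lemma increment_le (g g' : R -> R) (b c eta : R) :
  (forall s : R, is_derive s 1 g (g' s)) ->
  (forall s : R, `|s| <= `|b| -> `|g' s - c| <= eta) ->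
  `|g b - g 0 - b * c| <= eta * `|b|.
Proof.
move=> dg hg'.
have cont a a' : {within `[a, a'], continuous g}.
  by apply: derivable_within_continuous => x _; case: (dg x).
have [s0 hs0 ->] : exists2 s0, `|s0| <= `|b| & g b - g 0 = g' s0 * b.
  case: (lerP 0 b) => hb.
    have [s0] := MVT_segment hb (fun x _ => dg x) (cont 0 b).
    rewrite in_itv /= subr0 => /andP [s00 s0b] E; exists s0 => //.
    by rewrite !ger0_norm.
  have [s0] := MVT_segment (ltW hb) (fun x _ => dg x) (cont b 0).
  rewrite in_itv /= sub0r => /andP [bs0 s00] E; exists s0.
    by rewrite !ler0_norm ?lerN2 // ltW.
  by rewrite -[LHS]opprB E mulrN opprK.
by rewrite [b * c]mulrC -mulrBl normrM ler_wpM2r // hg'.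
Qed.

Lemma normr_small_eq0 (x c : R) : 0 <= c ->
  (forall eta, 0 < eta -> `|x| <= eta * c) -> x = 0.
Proof.
move=> c0 H; apply/eqP; rewrite -normr_le0; apply/ler_addgt0Pr => e e0.
have c1 : 0 < c + 1 by rewrite ltr_wpDl.
rewrite add0r; apply: le_trans (H _ (divr_gt0 e0 c1)) _.
by rewrite mulrAC ler_pdivrMr // ler_pM2l // lerDl.
Qed.

End RealAnalysis.

Section GroupLaw.
Variables (R : realType) (G : graded_group R).
Local Notation n := (gdim G).
Local Notation mul := (@gmul R G).
Local Notation deg := (@gdeg R G).

Lemma gmulNl (x : 'rV[R]_n) : mul (- x) x = 0.
Proof.
have := gmulN (- x); rewrite opprK => Nxx.
have : mul (mul (- x) x) (mul (- x) x) = mul (- x) x.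
  by rewrite gmulA -[mul (mul (- x) x) (- x)]gmulA gmulN gmulx0.
by rewrite -{2}[x]opprK Nxx gmulx0.
Qed.

Lemma gmulNK (x y : 'rV[R]_n) : mul x (mul (- x) y) = y.
Proof. by rewrite gmulA gmulN gmul0x. Qed.

Lemma dil_in_layer j (r : R) (V : 'rV[R]_n) :
  in_layer j V -> dil deg r V = r ^+ j *: V.
Proof.
move=> HV; apply/rowP => k; rewrite !mxE.
by case: (eqVneq (deg k) j) => [-> // | /HV ->]; rewrite !mulr0.
Qed.

Lemma norm_dil_le1 (r : R) (w : 'rV[R]_n) : 0 < r -> r <= 1 ->
  `|dil deg r w| <= r * `|w|.
Proof.
move=> r0 r1; rewrite -[r in r * _]expr1; apply: norm_dil_le => // l.
by rewrite ltnS leqn0 => /eqP dl; have := gdeg_pos l; rewrite dl.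
Qed.

Definition gmul2 (z : 'rV[R]_(n + n)) : 'rV[R]_n := mul (lsubmx z) (rsubmx z).

Lemma gmul2_row u v : gmul2 (row_mx u v) = mul u v.
Proof. by rewrite /gmul2 row_mxKl row_mxKr. Qed.

Lemma gmul_cont_at (p : 'rV[R]_n * 'rV[R]_n) : cont_at (fun q => mul q.1 q.2) p.
Proof.
have := continuous_cont_at ((@gmul_smooth R G [::]).1 (row_mx p.1 p.2) I).
move=> /[swap] e /[apply] -[d d0 Hd].
exists d => // q hq; have := Hd (row_mx q.1 q.2); rewrite /= !row_mxKl !row_mxKr; apply.
rewrite opp_row_mx add_row_mx norm_row_mx_lt //.
  exact: le_lt_trans (ler_norm_fst (q - p)) hq.
exact: le_lt_trans (ler_norm_snd (q - p)) hq.
Qed.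

Lemma derive_gmul2_0 v : derive gmul2 0 (row_mx 0 v) = v.
Proof.
rewrite /derive; apply: norm_lim_near_cst; near=> h.
have h0 : h != 0 by near: h; exact: nbhs_dnbhs_neq.
rewrite /= /shift addr0 scale_row_mx scaler0 -row_mx0 !gmul2_row !gmul0x.
by rewrite subr0 scalerA mulVf // scale1r.
Unshelve. all: by end_near.
Qed.

Local Notation erow m := (delta_mx ord0 m : 'rV[R]_n).
Local Notation dir m := (row_mx 0 (erow m) : 'rV[R]_(n + n)).

Lemma derive_gmul2_near0 eta : 0 < eta -> exists2 dl, 0 < dl &
  forall z m, `|z| < dl -> `|derive gmul2 z (dir m) - erow m| < eta.
Proof.
move=> eta0.
have near0 m : \forall z \near 0, `|derive gmul2 z (dir m) - erow m| < eta.
  have /cvgrPdist_lt /(_ eta eta0) := (@gmul_smooth R G [:: dir m]).1 0 I.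
  by rewrite /= derive_gmul2_0; apply: filterS => z; rewrite distrC.
have /nbhs_ballP [dl dl0 Hdl] := filter_forall (nbhs_filter _) near0.
exists dl => // z m hz; apply: Hdl.
by rewrite -ball_normE /ball_ /= sub0r normrN.
Qed.

Lemma gmul_coord_increment k m (u w : 'rV[R]_n) (b eta dl : R) :
  (forall z, `|z| < dl -> `|derive gmul2 z (dir m) - erow m| < eta) ->
  `|u| < dl -> (forall s, `|s| <= `|b| -> `|w + s *: erow m| < dl) ->
  `|mul u (w + b *: erow m) ord0 k - mul u w ord0 k - b * erow m ord0 k|
    <= eta * `|b|.
Proof.
move=> Hd hu hw.
have Erow (s : R) : s *: dir m + row_mx u w = row_mx u (w + s *: erow m).
  by rewrite scale_row_mx scaler0 add_row_mx add0r addrC.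
pose h s := mul u (w + s *: erow m) ord0 k.
have Dh (s : R) : is_derive s 1 h (derive gmul2 (s *: dir m + row_mx u w) (dir m) ord0 k).
  have dg : derivable gmul2 (s *: dir m + row_mx u w) (dir m).
    exact: ((@gmul_smooth R G [::]).2 (dir m) _ I).
  have [DU <-] := derivable_line dg.
  have -> : h = (fun t => gmul2 (t *: dir m + row_mx u w) ord0 k).
    by apply/funext => t; rewrite Erow gmul2_row.
  exact: is_derive_coord.
have := increment_le (b := b) (c := erow m ord0 k) (eta := eta) Dh.
rewrite /h scale0r addr0; apply => s /hw hs; apply: ltW.
have hz : `|s *: dir m + row_mx u w| < dl by rewrite Erow norm_row_mx_lt.
apply: le_lt_trans (Hd _ hz).
by have := mxcoef_le_norm (derive gmul2 (s *: dir m + row_mx u w) (dir m) - erow m) ord0 k;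
  rewrite !mxE.
Qed.

(* Only directional derivatives of the group law are available, so the increment
   in v is accumulated one coordinate direction at a time. *)
Lemma gmul_coord_near0 k eta : 0 < eta -> exists2 dl, 0 < dl &
  forall u v : 'rV[R]_n, `|u| < dl -> `|v| < dl ->
    `|mul u v ord0 k - u ord0 k - v ord0 k| <= eta * `|v|.
Proof.
move=> eta_gt0; have n0 : (0 < n)%N := leq_ltn_trans (leq0n k) (ltn_ord k).
pose eta1 := eta / n%:R; have eta0 : 0 < eta1 by rewrite divr_gt0 // ltr0n.
have [dl dl0 Hd] := derive_gmul2_near0 eta0.
exists dl => // u v hu hv.
pose g t := mul u (row_trunc v t) ord0 k - u ord0 k - row_trunc v t ord0 k.
suff S t : (t <= n)%N -> `|g t| <= t%:R * eta1 * `|v|.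
  have := S n (leqnn n); rewrite /g row_trunc_id.
  by rewrite [_%:R * _]mulrC divfK // pnatr_eq0 -lt0n.
elim: t => [_ | t IH tn]; first by rewrite /g row_trunc0 gmulx0 mxE !subrr normr0 !mul0r.
pose m := Ordinal tn.
have step : `|g t.+1 - g t| <= eta1 * `|v|.
  have -> : g t.+1 - g t = mul u (row_trunc v m + v ord0 m *: erow m) ord0 k
      - mul u (row_trunc v m) ord0 k - v ord0 m * erow m ord0 k.
    by rewrite /g (row_truncS v m) !mxE; ring.
  apply: le_trans (ler_wpM2l (ltW eta0) (mxcoef_le_norm v ord0 m)).
  apply: gmul_coord_increment (Hd^~ m) hu _ => s hs.
  exact: le_lt_trans (norm_row_trunc_add hs) hv.
have := ler_normD (g t.+1 - g t) (g t); rewrite subrK => /le_trans; apply.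
by rewrite -natr1 !mulrDl mul1r addrC lerD // IH // ltnW.
Qed.

(* The defect (ab)_k - a_k - b_k is multiplied by r ^+ deg k under dil r, while it
   is o(|b|) near 0 and |dil r b| <= r ^+ deg k * |b|; dilating towards 0 kills it. *)
Lemma gmul_coord_additive k (a b : 'rV[R]_n) :
  (forall l, (deg l < deg k)%N -> a ord0 l = 0 /\ b ord0 l = 0) ->
  mul a b ord0 k = a ord0 k + b ord0 k.
Proof.
move=> Hab; apply/eqP; rewrite -subr_eq0 opprD addrA; apply/eqP.
apply: (@normr_small_eq0 _ _ `|b|) => // eta eta0.
have [dl dl0 Hdl] := gmul_coord_near0 k eta0.
pose r := dl / (`|a| + `|b| + dl).
have den0 : 0 < `|a| + `|b| + dl by rewrite ltr_wpDl // addr_ge0.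
have r0 : 0 < r by exact: divr_gt0.
have r1 : r <= 1 by rewrite ler_pdivrMr // mul1r lerDr addr_ge0.
have rk0 : 0 < r ^+ deg k by exact: exprn_gt0.
have rdk : r ^+ deg k <= r.
  by rewrite -[leRHS]expr1; exact: ler_wiXn2l (ltW r0) r1 _ _ (gdeg_pos k).
have small (c : 'rV[R]_n) : `|c| <= `|a| + `|b| ->
    (forall l, (deg l < deg k)%N -> c ord0 l = 0) -> `|dil deg r c| < dl.
  move=> hc /(norm_dil_le r0 r1) /le_lt_trans; apply.
  apply: le_lt_trans (ler_wpM2r (normr_ge0 _) rdk) _.
  apply: le_lt_trans (ler_wpM2l (ltW r0) hc) _.
  by rewrite /r mulrAC ltr_pdivrMr // ltr_pM2l // ltrDl.
have ha : `|dil deg r a| < dl by apply: small; [rewrite lerDl | move=> l /Hab []].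
have hb : `|dil deg r b| < dl by apply: small; [rewrite lerDr | move=> l /Hab []].
have := Hdl _ _ ha hb; rewrite -gmul_dil // !mxE -!mulrBr normrM ger0_norm; last exact: ltW.
move=> H; rewrite -(ler_pM2l rk0); apply: le_trans H _.
rewrite mulrCA; apply: ler_wpM2l; first exact: ltW.
exact: norm_dil_le r0 r1 (fun l hl => (Hab l hl).2).
Qed.

Lemma gmul_dil_near (f : 'rV[R]_n -> 'rV[R]_n) (p : 'rV[R]_n * 'rV[R]_n) rho :
  cont_at f p.2 -> 0 < rho ->
  exists2 d, 0 < d & forall (eps : R) q, 0 < eps -> eps < d -> `|q - p| < d ->
    `|mul q.1 (dil deg eps (f q.2)) - p.1| < rho.
Proof.
move=> cf rho0; have [dm dm0 Hm] := gmul_cont_at (p.1, 0) rho0.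
have [df df0 Hf] := cf 1 ltr01.
have f1 : 0 < `|f p.2| + 1 by rewrite ltr_wpDl.
pose d := Num.min dm (Num.min df (Num.min 1 (dm / (`|f p.2| + 1)))).
exists d => [|eps q eps0]; first by rewrite !lt_min dm0 df0 ltr01 divr_gt0.
rewrite !lt_min => /andP [_ /andP [_ /andP [eps1 epsdm]]] /andP [hdm /andP [hdf _]].
have := Hm (q.1, dil deg eps (f q.2)); rewrite /= gmulx0; apply.
apply: norm_pair_lt; first exact: le_lt_trans (ler_norm_fst _) hdm.
rewrite /= subr0; apply: le_lt_trans (norm_dil_le1 _ eps0 (ltW eps1)) _.
have fq : `|f q.2| <= `|f p.2| + 1.
  have h := Hf q.2 (le_lt_trans (ler_norm_snd _) hdf).
  have t := ler_normD (f q.2 - f p.2) (f p.2); rewrite subrK in t; lra.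
apply: le_lt_trans (ler_wpM2l (ltW eps0) fq) _.
by rewrite -ltr_pdivlMr.
Qed.

End GroupLaw.

Section LayerDecomposition.
Variables (R : realType) (G : graded_group R).
Local Notation n := (gdim G).
Local Notation mul := (@gmul R G).
Local Notation deg := (@gdeg R G).

Lemma pr_layer_lip j (w w' : 'rV[R]_n) : `|pr_layer j w - pr_layer j w'| <= `|w - w'|.
Proof.
apply: mx_norm_le => // i l; rewrite (ord1 i) !mxE.
case: ifP => _; last by rewrite subrr normr0.
by have := mxcoef_le_norm (w - w') ord0 l; rewrite !mxE.
Qed.

Lemma pr_layer_in_layer j (w : 'rV[R]_n) : in_layer j (pr_layer j w).
Proof. by move=> k /negbTE hk; rewrite mxE hk. Qed.

(* z = layer_part 0 z * ... * layer_part t.-1 z * layer_rest t z, where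
   layer_part s z lies in the layer s.+1 and layer_rest t z vanishes in degrees <= t. *)
Fixpoint layer_rest (t : nat) (z : 'rV[R]_n) : 'rV[R]_n :=
  if t is t'.+1 then mul (- pr_layer t (layer_rest t' z)) (layer_rest t' z) else z.

Definition layer_part (t : nat) (z : 'rV[R]_n) := pr_layer t.+1 (layer_rest t z).

Lemma layer_rest_low t z l : (deg l <= t)%N -> layer_rest t z ord0 l = 0.
Proof.
elim: t l => [|t IH] l hl.
  by move: hl; rewrite leqn0 => /eqP hl0; have := gdeg_pos l; rewrite hl0.
rewrite /= gmul_coord_additive => [|l' hl'].
  rewrite !mxE; case: eqP => [_ | /eqP dl]; first by rewrite addNr.
  by rewrite oppr0 add0r IH // -ltnS ltn_neqAle dl.
have hl2 : (deg l' < t.+1)%N by exact: leq_trans hl' hl.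
by rewrite !mxE ltn_eqF // oppr0 IH.
Qed.

Lemma layer_rest_high t z : (\max_k deg k <= t)%N -> layer_rest t z = 0.
Proof.
by move=> ht; apply/rowP => l; rewrite layer_rest_low ?mxE // (leq_trans (leq_bigmax l)).
Qed.

Lemma layer_restE t z : layer_rest t z = mul (layer_part t z) (layer_rest t.+1 z).
Proof. by rewrite /= /layer_part gmulNK. Qed.

Lemma layer_rest_cont_at t z0 : cont_at (layer_rest t) z0.
Proof.
elim: t => [|t IH]; first exact: cont_at_lip.
pose f z := (- pr_layer t.+1 (layer_rest t z), layer_rest t z).
change (cont_at ((fun q => mul q.1 q.2) \o f) z0).
apply: cont_at_comp; last exact: gmul_cont_at.
apply: cont_at_pair => //.
change (cont_at ((fun w => - pr_layer t.+1 w) \o layer_rest t) z0).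
apply: cont_at_comp => //; apply: cont_at_lip => w.
by rewrite -opprD normrN pr_layer_lip.
Qed.

Lemma layer_part_cont_at t z0 : cont_at (layer_part t) z0.
Proof.
change (cont_at (pr_layer t.+1 \o layer_rest t) z0).
apply: cont_at_comp; first exact: layer_rest_cont_at.
by apply: cont_at_lip => w; exact: pr_layer_lip.
Qed.

End LayerDecomposition.

Section PansuQuotient.
Variables (R : realType) (G H : graded_group R).
Variable Phi : 'rV[R]_(gdim G) -> 'rV[R]_(gdim H).
Local Notation VG := 'rV[R]_(gdim G).
Local Notation mulG := (@gmul R G).
Local Notation degG := (@gdeg R G).
Local Notation degH := (@gdeg R H).

Definition pansu_quot (eps : R) (x z : VG) : 'rV[R]_(gdim H) :=
  dil degH eps^-1 (transl Phi x (dil degG eps z)).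

Lemma transl_mul x y w :
  transl Phi x (mulG y w) = gmul (transl Phi x y) (transl Phi (mulG x y) w).
Proof. by rewrite /transl -gmulA gmulNK gmulA. Qed.

Lemma pansu_quot_mul (eps : R) x y w : 0 < eps ->
  pansu_quot eps x (mulG y w) =
  gmul (pansu_quot eps x y) (pansu_quot eps (mulG x (dil degG eps y)) w).
Proof.
by move=> eps0; rewrite /pansu_quot gmul_dil // transl_mul gmul_dil // invr_gt0.
Qed.

Lemma pansu_quot0 eps x : pansu_quot eps x 0 = 0.
Proof. by rewrite /pansu_quot dil0 /transl gmulx0 gmulNl dil0. Qed.

Lemma pansu_quot_layer i j (eps : R) x V : in_layer j V ->
  pr_layer i (pansu_quot eps x V) = eps ^- i *: pr_layer i (transl Phi x (eps ^+ j *: V)).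
Proof.
move=> LV; rewrite /pansu_quot (dil_in_layer _ LV); apply/rowP => l; rewrite !mxE.
by case: eqP => [-> | _]; rewrite ?mulr0 // exprVn.
Qed.

Lemma layer_limits_of_unif_Pansu_diff (U : set VG) : unif_Pansu_diff U Phi ->
  forall i j : nat, exists L : VG * VG -> 'rV[R]_(gdim H),
      loc_unif_cvg0 (fun p : VG * VG => U p.1 /\ in_layer j p.2)
        (fun eps p => eps ^- i *: pr_layer i (transl Phi p.1 (eps ^+ j *: p.2))) L.
Proof.
move=> [PD HPD] i j; exists (fun p => pr_layer i (PD p.1 p.2)).
move=> p [Up _]; have [W HW HWe] := HPD p Up; exists W => // e /HWe.
apply: filterS => eps Hq q Wq [Uq Lq]; apply: le_lt_trans (Hq q Wq Uq).
by rewrite -(pansu_quot_layer _ _ _ Lq) pr_layer_lip.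
Qed.

End PansuQuotient.

Section NearZeroRight.
Variable R : realType.

Lemma near0_rightP (P : R -> Prop) : (\forall eps \near 0^'+, P eps) <->
  exists2 d, 0 < d & forall eps, 0 < eps -> eps < d -> P eps.
Proof.
split=> [/nbhs_ballP [d d0 Hd] | [d d0 Hd]].
  exists d => // eps e0 ed; apply: Hd => //.
  by rewrite -ball_normE /ball_ /= sub0r normrN gtr0_norm.
near=> eps; apply: Hd; near: eps; [exact: nbhs_right_gt | exact: nbhs_right_lt].
Unshelve. all: by end_near.
Qed.

Lemma near0_right_ex (P : R -> Prop) : (\forall eps \near 0^'+, P eps) ->
  forall d, 0 < d -> exists eps, [/\ 0 < eps, eps < d & P eps].
Proof.
move=> /near0_rightP [d0 d00 H] d d_gt0; pose eps := Num.min d0 d / 2.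
have m0 : 0 < Num.min d0 d by rewrite lt_min d00.
have epsm : eps < Num.min d0 d by rewrite /eps ltr_pdivrMr // ltr_pMr // ltr1n.
move: (epsm); rewrite lt_min => /andP [e0 e1].
by exists eps; split => //; [exact: divr_gt0 | exact: H (divr_gt0 m0 _) e0].
Qed.

End NearZeroRight.

Section LocUnifRow.
Variables (R : realType) (T : topologicalType) (m : nat) (D : set T).

Lemma loc_unif_cvg0_row (F : R -> T -> 'rV[R]_m) (Fk : 'I_m -> R -> T -> 'rV[R]_m) Lk :
  (forall k eps p, D p -> F eps p ord0 k = Fk k eps p ord0 k) ->
  (forall k, loc_unif_cvg0 D (Fk k) (Lk k)) ->
  loc_unif_cvg0 D F (fun p => \row_k Lk k p ord0 k).
Proof.
move=> EF HL p Dp.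
have HW k : exists W, nbhs p W /\ forall e, 0 < e -> \forall eps \near 0^'+,
    forall q, W q -> D q -> `|Fk k eps q - Lk k q| < e.
  by have [W ? ?] := HL k p Dp; exists W.
have [Wk HWk] := choice HW.
exists (fun q => forall k, Wk k q); first exact: filter_forall (fun k => (HWk k).1).
move=> e e0; have := filter_forall (at_right_proper_filter (0 : R)) (fun k => (HWk k).2 e e0).
apply: filterS => eps Hk q Wq Dq.
apply: mx_norm_lt => // i k; rewrite (ord1 i) !mxE EF //.
apply: le_lt_trans (Hk k q (Wq k) Dq).
by have := mxcoef_le_norm (Fk k eps q - Lk k q) ord0 k; rewrite !mxE.
Qed.

End LocUnifRow.

Section JointLimits.
Variables (R : realType) (V : normedModType R) (m : nat).
Implicit Types (D : set V) (F : R -> V -> 'rV[R]_m).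

Definition joint_lim D F (M : 'rV[R]_m) (p : V) :=
  forall e, 0 < e -> exists2 d, 0 < d & forall eps q,
    0 < eps -> eps < d -> `|q - p| < d -> D q -> `|F eps q - M| < e.

Lemma joint_lim_of_loc_unif D F L p : D p -> loc_unif_cvg0 D F L ->
  (\forall eps \near 0^'+, cont_at (F eps) p) -> joint_lim D F (L p) p.
Proof.
move=> Dp HL Fc e e0; have e4 : 0 < e / 4 by exact: divr_gt0.
have [W /nbhs_norm_lt [r r0 Wr] /(_ _ e4) /near0_rightP [d0 d00 HF]] := HL p Dp.
have [eps0 [eps00 eps0d0 /(_ _ e4) [d1 d10 HFp]]] := near0_right_ex Fc d00.
exists (Num.min r (Num.min d0 d1)); first by rewrite !lt_min r0 d00 d10.
move=> eps q eps_gt0; rewrite !lt_min => /andP [_ /andP [epsd0 _]].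
move=> /andP [/Wr Wq /andP [_ qd1]] Dq.
have A1 := HF eps eps_gt0 epsd0 q Wq Dq.
have A2 := HF eps0 eps00 eps0d0 q Wq Dq.
have A3 := HFp q qd1.
have A4 := HF eps0 eps00 eps0d0 p (Wr p _) Dp.
rewrite subrr normr0 in A4; have {}A4 := A4 r0.
have T1 := ler_distD (L q) (F eps q) (L p).
have T2 := ler_distD (F eps0 q) (L q) (L p).
have T3 := ler_distD (F eps0 p) (F eps0 q) (L p).
rewrite [`|L q - F eps0 q|]distrC in T2; lra.
Qed.

Lemma joint_lim_near D F M : (forall p, D p -> joint_lim D F (M p) p) ->
  forall p, D p -> forall e, 0 < e ->
    \forall q \near p & eps \near 0^'+, D q -> `|F eps q - M q| < e.
Proof.
move=> HM p Dp e e0; have e4 : 0 < e / 4 by exact: divr_gt0.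
have [d d0 Hd] := HM p Dp _ e4.
exists ([set q | `|q - p| < d], [set eps | 0 < eps < d]) => /=.
  split; first by apply/nbhs_normP; exists d => // q; rewrite /ball_ /= distrC.
  by apply/near0_rightP; exists d => // eps e1 e2; apply/andP.
move=> [q eps] /= [hq /andP [eps0 epsd]] Dq.
have [d' d'0 Hd'] := HM q Dq _ e4.
have [eps' [eps'0 eps'd eps'd']] := near0_right_ex (nbhs_right_lt d'0) d0.
have A1 := Hd eps q eps0 epsd hq Dq.
have A2 := Hd eps' q eps'0 eps'd hq Dq.
have A3 := Hd' eps' q eps'0 eps'd' (_ : `|q - q| < d') Dq.
rewrite subrr normr0 in A3; have {}A3 := A3 d'0.
have T1 := ler_distD (M p) (F eps q) (M q).
have T2 := ler_distD (F eps' q) (M p) (M q).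
rewrite [`|M p - F eps' q|]distrC in T2; lra.
Qed.

Lemma loc_unif_of_joint_lim D F M :
  (forall p, D p -> exists2 K, compact K & nbhs p K /\ K `<=` D) ->
  (forall p, D p -> joint_lim D F (M p) p) -> loc_unif_cvg0 D F M.
Proof.
move=> locK HM p Dp; have [K cK [pK KD]] := locK p Dp.
exists K => // e e0.
have cov : \forall eps \near 0^'+, K `<=` (fun q => D q -> `|F eps q - M q| < e).
  apply: ((compact_near_coveringP _).1 cK R 0^'+
    (fun eps q => D q -> `|F eps q - M q| < e)) => q Kq.
  exact (joint_lim_near HM (KD q Kq) e0).
by apply: filterS cov => eps HK q Kq; exact: HK.
Qed.

End JointLimits.

Section Cubes.
Variables (R : realType) (n : nat).

Definition cube (c : 'rV[R]_n) (r : R) :=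
  [set v : 'rV[R]_n | forall i, `[c ord0 i - r, c ord0 i + r]%classic (v ord0 i)].

Lemma compact_cube c r : compact (cube c r).
Proof.
apply: (@rV_compact _ _ (fun i => `[c ord0 i - r, c ord0 i + r]%classic)) => i.
exact: segment_compact.
Qed.

Lemma cubeP c r : 0 <= r -> forall v, cube c r v <-> `|v - c| <= r.
Proof.
move=> r0 v; split=> [Hv | hv i].
  by apply: mx_norm_le => // i j; rewrite (ord1 i) !mxE distrC ler_distlC; exact: Hv.
rewrite /= in_itv /= -ler_distlC distrC.
by apply: le_trans hv; have := mxcoef_le_norm (v - c) ord0 i; rewrite !mxE.
Qed.

Lemma compact_nbhs_fst (U : set 'rV[R]_n) (p : 'rV[R]_n * 'rV[R]_n) : open U -> U p.1 ->
  exists2 K, compact K & nbhs p K /\ K `<=` (fun q : 'rV[R]_n * 'rV[R]_n => U q.1).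
Proof.
move=> oU Up; have /nbhs_ballP [r r0 Hr] := open_nbhs_nbhs (conj oU Up).
have r2 : 0 < r / 2 by exact: divr_gt0.
exists (cube p.1 (r / 2) `*` cube p.2 (r / 2)).
  by apply: compact_setX; exact: compact_cube.
split.
  apply/nbhs_ballP; exists (r / 2) => // q [h1 h2].
  move: h1 h2; rewrite -!ball_normE /ball_ /= => h1 h2.
  by split; apply/(cubeP _ (ltW r2)); rewrite distrC ltW.
move=> q [/(cubeP _ (ltW r2)) h1 _]; apply: Hr.
rewrite -ball_normE /ball_ /= distrC; apply: le_lt_trans h1 _.
by rewrite ltr_pdivrMr // ltr_pMr // ltr1n.
Qed.

End Cubes.

Section Backward.
Variables (R : realType) (G H : graded_group R).
Variable U : set 'rV[R]_(gdim G).
Variable Phi : 'rV[R]_(gdim G) -> 'rV[R]_(gdim H).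
Hypothesis oU : open U.
Hypothesis sPhi : smooth_on U Phi.
Local Notation VG := 'rV[R]_(gdim G).
Local Notation VH := 'rV[R]_(gdim H).
Local Notation mulG := (@gmul R G).
Local Notation mulH := (@gmul R H).
Local Notation degG := (@gdeg R G).
Local Notation degH := (@gdeg R H).
Local Notation Fp := (fun eps (p : VG * VG) => pansu_quot Phi eps p.1 p.2).
Local Notation DU := (fun p : VG * VG => U p.1).
Local Notation DUl j := (fun p : VG * VG => U p.1 /\ in_layer j p.2).

Lemma near0_gmul_dil_in p : U p.1 -> \forall eps \near 0^'+, U (mulG p.1 (dil degG eps p.2)).
Proof.
move=> Up; have [r r0 Hr] := open_norm_lt oU Up.
have [d d0 Hd] := gmul_dil_near (p := p) (cont_at_lip (f := id) (fun w => lexx _)) r0.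
by apply/near0_rightP; exists d => // eps e0 ed; apply/Hr/Hd; rewrite // subrr normr0.
Qed.

Lemma pansu_quot_cont_at (eps : R) (p : VG * VG) : 0 < eps -> U p.1 ->
  U (mulG p.1 (dil degG eps p.2)) -> cont_at (Fp eps) p.
Proof.
move=> eps0 Up Uy.
have cPhi x : U x -> cont_at Phi x by move=> Ux; exact: continuous_cont_at ((sPhi [::]).1 x Ux).
have cN (w : VH) : cont_at -%R w by apply: cont_at_lip => w'; rewrite -opprD normrN.
have c1 : cont_at (fun q : VG * VG => - Phi q.1) p.
  exact: cont_at_comp (cont_at_comp (cont_at_fst p) (cPhi _ Up)) (cN _).
have cy : cont_at (fun q : VG * VG => mulG q.1 (dil degG eps q.2)) p.
  apply: (cont_at_comp (f := fun q : VG * VG => (q.1, dil degG eps q.2))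
    (g := fun q => mulG q.1 q.2)); last exact: gmul_cont_at.
  exact: cont_at_pair (cont_at_fst p) (cont_at_comp (cont_at_snd p) (dil_cont_at _ _ _)).
have c2 : cont_at (fun q : VG * VG => Phi (mulG q.1 (dil degG eps q.2))) p.
  exact: cont_at_comp cy (cPhi _ Uy).
have c3 : cont_at (fun q : VG * VG => mulH (- Phi q.1) (Phi (mulG q.1 (dil degG eps q.2)))) p.
  exact: (cont_at_comp (g := fun q => mulH q.1 q.2) (cont_at_pair c1 c2) (gmul_cont_at _)).
exact: (cont_at_comp (g := dil degH eps^-1) c3 (dil_cont_at _ _ _)).
Qed.

Lemma layer_joint_lim j L : loc_unif_cvg0 (DUl j) Fp L ->
  forall p, DUl j p -> joint_lim (DUl j) Fp (L p) p.
Proof.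
move=> HL p [Up Lp]; apply: joint_lim_of_loc_unif => //.
have Uy := near0_gmul_dil_in Up.
near=> eps; apply: pansu_quot_cont_at => //; near: eps => //.
Unshelve. all: by end_near.
Qed.

Lemma pansu_quot_layer_loc_unif :
  (forall i j : nat, (0 < i)%N -> (0 < j)%N -> exists L : VG * VG -> VH,
     loc_unif_cvg0 (DUl j)
       (fun eps p => eps ^- i *: pr_layer i (transl Phi p.1 (eps ^+ j *: p.2))) L) ->
  forall j, (0 < j)%N -> exists L, loc_unif_cvg0 (DUl j) Fp L.
Proof.
move=> Hyp j j0.
have HC i : exists L, (0 < i)%N ->
    loc_unif_cvg0 (DUl j) (fun eps p => pr_layer i (Fp eps p)) L.
  case: (posnP i) => [-> | i0]; first by exists (fun _ => 0).
  have [L HL] := Hyp i j i0 j0; exists L => _ p Dp.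
  have [W HW HWe] := HL p Dp; exists W => // e /HWe.
  by apply: filterS => eps Hq q Wq [Uq Lq]; rewrite (pansu_quot_layer _ _ _ _ Lq); exact: Hq.
have [Lf HLf] := choice HC; eexists.
apply: (loc_unif_cvg0_row (Fk := fun k eps p => pr_layer (degH k) (Fp eps p))).
  by move=> k eps p _; rewrite [RHS]mxE eqxx.
by move=> k; exact: HLf (gdeg_pos k).
Qed.

Definition stage_quot t eps (q : VG * VG) := pansu_quot Phi eps q.1 (layer_rest t q.2).

Lemma stage_quot_high t p : (\max_k degG k <= t)%N -> joint_lim DU (stage_quot t) 0 p.
Proof.
move=> ht e e0; exists 1 => // eps q *.
by rewrite /stage_quot layer_rest_high // pansu_quot0 subrr normr0.
Qed.

Lemma stage_quot_step t L M : loc_unif_cvg0 (DUl t.+1) Fp L ->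
  (forall p, U p.1 -> joint_lim DU (stage_quot t.+1) (M p) p) ->
  forall p, U p.1 -> joint_lim DU (stage_quot t) (mulH (L (p.1, layer_part t p.2)) (M p)) p.
Proof.
move=> HL HM p Up e e0.
have Dp' : DUl t.+1 (p.1, layer_part t p.2) by split=> //; exact: pr_layer_in_layer.
have [dm dm0 Hm] := gmul_cont_at (L (p.1, layer_part t p.2), M p) e0.
have [d1 d10 H1] := layer_joint_lim HL Dp' dm0.
have [d2 d20 H2] := HM p Up dm dm0.
have [d3 d30 H3] := layer_part_cont_at t p.2 d10.
have [r r0 Hr] := open_norm_lt oU Up.
have d2r : 0 < Num.min d2 r by rewrite lt_min d20 r0.
have [d4 d40 H4] := gmul_dil_near (p := p) (layer_part_cont_at t p.2) d2r.
exists (Num.min d1 (Num.min d2 (Num.min d3 d4))); first by rewrite !lt_min d10 d20 d30 d40.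
move=> eps q eps0; rewrite !lt_min => /andP [ed1 /andP [ed2 /andP [_ ed4]]].
move=> /andP [hq1 /andP [hq2 /andP [hq3 hq4]]] Uq.
rewrite /stage_quot layer_restE pansu_quot_mul //.
set y := mulG q.1 (dil degG eps (layer_part t q.2)).
have := H4 eps q eps0 ed4 hq4; rewrite lt_min -/y => /andP [hy2 hyr].
have h1 : `|Fp eps (q.1, layer_part t q.2) - L (p.1, layer_part t p.2)| < dm.
  apply: H1 => //; last by split=> //; exact: pr_layer_in_layer.
  apply: norm_pair_lt; first exact: le_lt_trans (ler_norm_fst _) hq1.
  exact: H3 (le_lt_trans (ler_norm_snd _) hq3).
have h2 : `|stage_quot t.+1 eps (y, q.2) - M p| < dm.
  apply: H2 => //; last exact: Hr.
  by apply: norm_pair_lt => //; exact: le_lt_trans (ler_norm_snd _) hq2.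
pose x := (Fp eps (q.1, layer_part t q.2), stage_quot t.+1 eps (y, q.2)).
have := Hm x (norm_pair_lt (x := x - (L (p.1, layer_part t p.2), M p)) h1 h2).
by rewrite /x /stage_quot /=.
Qed.

Lemma stage_quot_joint_lim : (forall j, (0 < j)%N -> exists L, loc_unif_cvg0 (DUl j) Fp L) ->
  forall k t, (\max_l degG l <= t + k)%N ->
  exists M, forall p, U p.1 -> joint_lim DU (stage_quot t) (M p) p.
Proof.
move=> HL; elim=> [|k IH] t htk.
  by exists (fun _ => 0) => p _; apply: stage_quot_high; rewrite -(addn0 t).
have [L HLt] := HL t.+1 isT.
rewrite -addSnnS in htk; have [M HM] := IH t.+1 htk.
by exists (fun p => mulH (L (p.1, layer_part t p.2)) (M p)); exact: stage_quot_step.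
Qed.

Lemma unif_Pansu_diff_of_layer_limits :
  (forall i j : nat, (0 < i)%N -> (0 < j)%N -> exists L : VG * VG -> VH,
     loc_unif_cvg0 (DUl j)
       (fun eps p => eps ^- i *: pr_layer i (transl Phi p.1 (eps ^+ j *: p.2))) L) ->
  unif_Pansu_diff U Phi.
Proof.
move=> Hyp.
have [M HM] := stage_quot_joint_lim (pansu_quot_layer_loc_unif Hyp) (leq_addl 0 _).
exists (fun x z => M (x, z)); have -> : (fun p : VG * VG => M (p.1, p.2)) = M.
  by apply/funext => -[].
exact: loc_unif_of_joint_lim (fun p Up => compact_nbhs_fst oU Up) HM.
Qed.

End Backward.

Unset Implicit Arguments.

Theorem proposition2p8 (R : realType) (G H : graded_group R)
  (U : set 'rV[R]_(gdim G)) (Phi : 'rV[R]_(gdim G) -> 'rV[R]_(gdim H)) :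
  open U -> smooth_on U Phi ->
  (unif_Pansu_diff U Phi <->
   forall i j : nat, (0 < i)%N -> (0 < j)%N ->
     exists L : 'rV[R]_(gdim G) * 'rV[R]_(gdim G) -> 'rV[R]_(gdim H),
       loc_unif_cvg0
         (fun p : 'rV[R]_(gdim G) * 'rV[R]_(gdim G) => U p.1 /\ in_layer j p.2)
         (fun eps p => eps ^- i *: pr_layer i (transl Phi p.1 (eps ^+ j *: p.2)))
         L).
Proof.
move=> oU sPhi; split=> [HPD i j _ _ | ]; first exact: layer_limits_of_unif_Pansu_diff.
exact: unif_Pansu_diff_of_layer_limits.
Qed.
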